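(* Let $G$ be a finite undirected graph, $\tau\ge1$ an integer, $e=(u,v)\in E(G)$, and let $G'$ be the graph obtained from $G$ by deleting the edge $e$. Let $e'=(u',v')$ be an edge of $G'$ with $u',v'\in\Delta_\tau(e,G)$. If $\mathrm{dis}_G(u,u')=\mathrm{dis}_{G'}(u,u')$, $\mathrm{dis}_G(u,v')=\mathrm{dis}_{G'}(u,v')$, $\mathrm{dis}_G(v,u')=\mathrm{dis}_{G'}(v,u')$ and $\mathrm{dis}_G(v,v')=\mathrm{dis}_{G'}(v,v')$, then $\mathrm{sup}_\tau(e',G)=\mathrm{sup}_\tau(e',G')$.
   Context: Graphs are finite, simple, undirected and unweighted; paths may repeat vertices and their length is the number of edges. $\mathrm{dis}_H(x,y)$ is the length of a shortest path between $x$ and $y$ in $H$ ($\infty$ if none). For vertices $v,u$ of a graph $H$, $u$ is $\tau$-hop reachable from $v$ in $H$ if there is a path between them in $H$ of length at most $\tau$. $N_\tau(v,H)$ is the set of vertices $u\ne v$ that are $\tau$-hop reachable from $v$ in $H$. For an edge $e=(u,v)$ of $H$, $\Delta_\tau(e,H)=N_\tau(u,H)\cap N_\tau(v,H)$ and $\mathrm{sup}_\tau(e,H)=|\Delta_\tau(e,H)|$. *)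

From mathcomp Require Import all_boot.
From Stdlib Require Import ClassicalDescription.
Set Implicit Arguments. Unset Strict Implicit. Unset Printing Implicit Defensive.

Definition simple_graph (T : finType) (g : rel T) : Prop :=
  symmetric g /\ irreflexive g.

Definition del_edge (T : finType) (g : rel T) (u v : T) : rel T :=
  [rel x y | g x y && ~~ (((x == u) && (y == v)) || ((x == v) && (y == u)))].

Definition walk_len (T : finType) (g : rel T) (n : nat) (x y : T) : bool :=
  [exists p : n.-tuple T, path g x p && (last x p == y)].

Definition hop_reach (T : finType) (g : rel T) (tau : nat) (x y : T) : bool :=
  [exists n : 'I_tau.+1, walk_len g n x y].

(* dis_H(x,y): length of a shortest path; None encodes infinity. *)
Definition dis (T : finType) (g : rel T) (x y : T) : option nat :=
  match excluded_middle_informative (exists n, walk_len g n x y) with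
  | left H => Some (ex_minn H)
  | right _ => None
  end.

Definition Nbhd (T : finType) (g : rel T) (tau : nat) (v : T) : {set T} :=
  [set w | (w != v) && hop_reach g tau v w].

Definition Delta (T : finType) (g : rel T) (tau : nat) (u v : T) : {set T} :=
  Nbhd g tau u :&: Nbhd g tau v.

Definition sup (T : finType) (g : rel T) (tau : nat) (u v : T) : nat :=
  #|Delta g tau u v|.

From mathcomp Require Import all_boot.
From Stdlib Require Import ClassicalDescription.

Set Implicit Arguments.
Unset Strict Implicit.

(* Deleting the edge {u,v} cannot make a vertex w closer to a, so only the
   converse needs an argument.  Follow a walk of G from w to a; when it first
   uses the deleted edge it stands at u or v, and the remaining part is at
   least dis_G(z, a) = dis_G'(z, a) long, so it can be replaced by a shortest
   walk of G'.  Hence tau-hop reachability from a is the same in G and G' when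
   a has the same distance to u and to v in both graphs, which for a = u' and
   a = v' gives equal tau-neighbourhoods, hence equal Delta and sup. *)

Section Walks.

Variables (T : finType) (g : rel T).

Lemma walk_lenP n x y :
  reflect (exists2 p : seq T, size p = n & path g x p && (last x p == y))
          (walk_len g n x y).
Proof.
apply: (iffP existsP) => [[p Hp] | [p Hsize Hp]].
  by exists (tval p); rewrite ?size_tuple.
have Hsize' : size p == n by apply/eqP.
by exists (Tuple Hsize').
Qed.

Lemma walk_len0 x y : walk_len g 0 x y = (x == y).
Proof.
apply/walk_lenP/eqP => [[[|//] _ /andP[_ /eqP]] // | ->].
by exists [::]; rewrite ?eqxx.
Qed.

Lemma walk_lenS n x y :
  walk_len g n.+1 x y = [exists z, g x z && walk_len g n z y].
Proof.
apply/walk_lenP/existsP => [[[|z p] //= [Hn] /andP[/andP[Hxz Hp] Hl]] |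
                            [z /andP[Hxz /walk_lenP[p Hn Hp]]]].
  by exists z; rewrite Hxz; apply/walk_lenP; exists p; rewrite ?Hp ?Hl.
by exists (z :: p); rewrite /= ?Hn ?Hxz.
Qed.

Lemma walk_len_rev n x y :
  symmetric g -> walk_len g n x y = walk_len g n y x.
Proof.
move=> g_sym.
suff rev_walk a b : walk_len g n a b -> walk_len g n b a by apply/idP/idP; apply: rev_walk.
case/walk_lenP=> p Hn /andP[Hp /eqP Hl]; apply/walk_lenP.
exists (rev (belast a p)); first by rewrite size_rev size_belast.
rewrite -Hl rev_path (eq_path (e' := g)) ?Hp /=; last by move=> c d /=; apply: g_sym.
by case: p {Hn Hp Hl} => [|c q] //=; rewrite rev_cons last_rcons.
Qed.

Lemma dis_walk x y d : dis g x y = Some d -> walk_len g d x y.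
Proof.
by rewrite /dis; case: excluded_middle_informative => // H [<-]; case: ex_minnP.
Qed.

Lemma dis_le_walk n x y :
  walk_len g n x y -> exists2 d, dis g x y = Some d & d <= n.
Proof.
rewrite /dis => Hn; case: excluded_middle_informative => [H | []]; last by exists n.
by exists (ex_minn H) => //; case: ex_minnP => m _; apply.
Qed.

End Walks.

Section Subgraph.

Variables (T : finType) (g g' : rel T) (a : T).

Lemma walk_len_subrel n x y :
  subrel g' g -> walk_len g' n x y -> walk_len g n x y.
Proof.
move=> sub /walk_lenP[p Hn /andP[Hp Hl]]; apply/walk_lenP.
by exists p; rewrite ?(sub_path sub Hp).
Qed.

Hypothesis dis_at_lost_edges :
  forall x y, g x y -> ~~ g' x y -> dis g x a = dis g' x a.

Lemma walk_len_shorten n x :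
  walk_len g n x a -> exists2 m, m <= n & walk_len g' m x a.
Proof.
elim: n x => [|n IHn] x; first by move=> Hxa; exists 0; rewrite // walk_len0 -(walk_len0 g).
rewrite walk_lenS => /existsP[y /andP[Hxy Hya]].
have [Hxy' | Hlost] := boolP (g' x y).
  have [m Hm Hw] := IHn y Hya.
  by exists m.+1; rewrite // walk_lenS; apply/existsP; exists y; rewrite Hxy'.
have Hxa : walk_len g n.+1 x a.
  by rewrite walk_lenS; apply/existsP; exists y; rewrite Hxy.
have [d Hd Hdn] := dis_le_walk Hxa.
by exists d; last by rewrite (dis_at_lost_edges Hxy Hlost) in Hd; apply: dis_walk.
Qed.

Lemma hop_reach_subrel tau w :
  symmetric g -> symmetric g' -> subrel g' g ->
  hop_reach g tau a w = hop_reach g' tau a w.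
Proof.
move=> g_sym g'_sym sub.
apply/existsP/existsP => [[n Hn] | [n Hn]]; last by exists n; apply: walk_len_subrel Hn.
rewrite walk_len_rev // in Hn; have [m Hm Hw] := walk_len_shorten Hn.
by exists (Ordinal (leq_ltn_trans Hm (ltn_ord n))); rewrite walk_len_rev.
Qed.

End Subgraph.

Section DeleteEdge.

Variables (T : finType) (g : rel T) (u v : T).

Lemma del_edge_sym : symmetric g -> symmetric (del_edge g u v).
Proof.
move=> g_sym x y; rewrite /del_edge /= g_sym.
by case: (x == u); case: (x == v); case: (y == u); case: (y == v); rewrite ?andbF.
Qed.

Lemma del_edge_sub : subrel (del_edge g u v) g.
Proof. by move=> x y /andP[]. Qed.

Lemma del_edge_lost x y :
  g x y -> ~~ del_edge g u v x y -> (x == u) || (x == v).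
Proof.
by rewrite /del_edge /= => -> /negbNE /orP[] /andP[-> _]; rewrite ?orbT.
Qed.

Lemma Nbhd_del_edge tau a :
  symmetric g ->
  dis g u a = dis (del_edge g u v) u a -> dis g v a = dis (del_edge g u v) v a ->
  Nbhd g tau a = Nbhd (del_edge g u v) tau a.
Proof.
move=> g_sym dis_u dis_v; apply/setP => w; rewrite !inE.
have lost x y : g x y -> ~~ del_edge g u v x y -> dis g x a = dis (del_edge g u v) x a.
  by move=> Hxy /(del_edge_lost Hxy) /orP[] /eqP ->.
by rewrite (hop_reach_subrel lost) //; [apply: del_edge_sym | apply: del_edge_sub].
Qed.

End DeleteEdge.

Unset Implicit Arguments.

Theorem lemma8 (T : finType) (g : rel T) (tau : nat) (u v u' v' : T) :
  simple_graph g -> 1 <= tau ->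
  g u v ->
  del_edge g u v u' v' ->
  u' \in Delta g tau u v -> v' \in Delta g tau u v ->
  dis g u u' = dis (del_edge g u v) u u' ->
  dis g u v' = dis (del_edge g u v) u v' ->
  dis g v u' = dis (del_edge g u v) v u' ->
  dis g v v' = dis (del_edge g u v) v v' ->
  sup g tau u' v' = sup (del_edge g u v) tau u' v'.
Proof.
move=> [g_sym _] _ _ _ _ _ dis_uu' dis_uv' dis_vu' dis_vv'.
by rewrite /sup /Delta (Nbhd_del_edge _ g_sym dis_uu' dis_vu')
           (Nbhd_del_edge _ g_sym dis_uv' dis_vv').
Qed.
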